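(* Let $Y$ be a normed linear space, $F\subset\mathbb R^n$, $x\in F\cap\operatorname{der}F$, $f\colon F\to Y$, and let $L\in\mathcal L(\mathbb R^n,Y)$ be a relative strict derivative of $f$ at $x$ (with respect to $F$). Let $v_1,\dots,v_n\in\operatorname{Ptg}(F,x)$ be unit vectors and $|\det(v_1,\dots,v_n)|>d>0$. Then $$\|L\|_{\mathcal L(\mathbb R^n,Y)}\le\limsup_{\substack{y\to x,\ z\to x\\ y,z\in F,\ y\ne z}}\frac nd\,\frac{\|f(y)-f(z)\|_Y}{|y-z|}.$$
   Context: $\operatorname{der}F$ is the set of accumulation points of $F$. The paratingent cone $\operatorname{Ptg}(F,x)$ is the set of $v\in\mathbb R^n$ for which there are $x_k,y_k\in F$ and $\alpha_k\in\mathbb R$ ($k\in\mathbb N$) with $x_k\to x$, $y_k\to x$ and $\alpha_k(y_k-x_k)\to v$. $L$ is a relative strict derivative of $f$ at $x$ if $x$ is isolated in $F$ or $\|f(y)-f(z)-L(y-z)\|/|y-z|\to0$ as $y,z\to x$, $y,z\in F$, $y\ne z$ (with $y=x$ or $z=x$ allowed). *)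

From HB Require Import structures.
From mathcomp Require Import all_boot all_order all_algebra.
From mathcomp Require Import all_classical all_reals all_analysis.
Set Implicit Arguments. Unset Strict Implicit. Unset Printing Implicit Defensive.
Import Order.TTheory GRing.Theory Num.Theory.
Import numFieldNormedType.Exports.
Local Open Scope classical_set_scope.
Local Open Scope ring_scope.

Definition enorm {R : realType} {n : nat} (u : 'rV[R]_n) : R :=
  Num.sqrt (\sum_(i < n) (u ord0 i) ^+ 2).

Definition ecvg {R : realType} {n : nat} (u : nat -> 'rV[R]_n) (a : 'rV[R]_n) : Prop :=
  forall e : R, 0 < e -> exists N : nat, forall k : nat, (N <= k)%N -> enorm (u k - a) < e.

Definition der {R : realType} {n : nat} (F : set 'rV[R]_n) : set 'rV[R]_n :=
  [set x | forall e : R, 0 < e -> exists2 y, F y & y != x /\ enorm (y - x) < e].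

Definition isolated_in {R : realType} {n : nat} (F : set 'rV[R]_n) (x : 'rV[R]_n) : Prop :=
  F x /\ ~ der F x.

Definition Ptg {R : realType} {n : nat} (F : set 'rV[R]_n) (x : 'rV[R]_n) : set 'rV[R]_n :=
  [set v | exists (xs ys : nat -> 'rV[R]_n) (al : nat -> R),
      (forall k, F (xs k)) /\ (forall k, F (ys k)) /\
      ecvg xs x /\ ecvg ys x /\ ecvg (fun k => al k *: (ys k - xs k)) v].

Definition rel_strict_derivative {R : realType} {n : nat} {Y : normedModType R}
    (F : set 'rV[R]_n) (f : 'rV[R]_n -> Y) (x : 'rV[R]_n) (L : 'rV[R]_n -> Y) : Prop :=
  isolated_in F x \/
  forall e : R, 0 < e -> exists2 delta : R, 0 < delta &
    forall y z, F y -> F z -> y != z -> enorm (y - x) < delta -> enorm (z - x) < delta ->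
      `|f y - f z - L (y - z)| <= e * enorm (y - z).

Definition opnorm {R : realType} {n : nat} {Y : normedModType R} (L : 'rV[R]_n -> Y) : \bar R :=
  ereal_sup [set (`|L u|)%:E | u in [set u | enorm u <= 1]].

Definition limsup_pairs {R : realType} {n : nat} (F : set 'rV[R]_n) (x : 'rV[R]_n)
    (g : 'rV[R]_n -> 'rV[R]_n -> R) : \bar R :=
  ereal_inf [set ereal_sup [set (g p.1 p.2)%:E | p in [set p : 'rV[R]_n * 'rV[R]_n |
                    F p.1 /\ F p.2 /\ p.1 != p.2 /\ enorm (p.1 - x) < delta /\ enorm (p.2 - x) < delta]]
            | delta in [set delta : R | 0 < delta]].

From HB Require Import structures.
From mathcomp Require Import all_boot all_order all_algebra.
From mathcomp Require Import all_classical all_reals all_analysis.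
From mathcomp Require Import ring lra.
Import Order.TTheory GRing.Theory Num.Theory.
Import numFieldNormedType.Exports.
Set Implicit Arguments. Unset Strict Implicit. Unset Printing Implicit Defensive.
Local Open Scope classical_set_scope.
Local Open Scope ring_scope.

(* If [r] exceeds the limsup, [f] is [K]-Lipschitz near [x] on [F], with
   [K = r d / n]; strict differentiability passes this bound to [L] on
   differences of nearby points of [F], hence, in the limit, [|L v| <= K |v|]
   for every paratingent vector [v].  The unit vectors [v_i] span a
   parallelotope of volume [> d], so by Cramer's rule and Hadamard's
   inequality every [u] with [|u| <= 1] has coordinates of size at most
   [1 / |det v|] in the basis [v_i]; thus [|L u| <= n K / |det v| <= r]. *)

Section Hadamard.
Variable R : realFieldType.

Lemma gram_diag_ge0 m n (A : 'M[R]_(m, n)) i : 0 <= (A *m A^T) i i.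
Proof. by rewrite mxE; apply: sumr_ge0 => t _; rewrite mxE -expr2 sqr_ge0. Qed.

Lemma gram_diag_eq0 m n (A : 'M[R]_(m, n)) i : (A *m A^T) i i = 0 -> row i A = 0.
Proof.
rewrite mxE => /eqP; rewrite psumr_eq0 => [/allP A0|t _]; last by rewrite mxE -expr2 sqr_ge0.
apply/rowP => t; have /implyP/(_ isT) := A0 t (mem_index_enum t).
by rewrite !mxE mulf_eq0 orbb => /eqP.
Qed.

Definition orthogonal_rows m n (A : 'M[R]_(m, n)) :=
  forall i j, i != j -> (A *m A^T) i j = 0.

Lemma orthogonal_rows_projection k n (C : 'M[R]_(k, n)) (b : 'rV[R]_n) :
  orthogonal_rows C -> exists mu : 'rV[R]_k, (b - mu *m C) *m C^T = 0.
Proof.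
move=> oC; exists (\row_j ((b *m C^T) 0 j / (C *m C^T) j j)).
apply/rowP => j; rewrite mulmxBl -mulmxA [LHS]mxE [X in _ + X]mxE [X in _ - X]mxE [RHS]mxE.
rewrite (bigD1 j) //= big1 => [|l lj]; last by rewrite oC ?mulr0 // eq_sym.
rewrite addr0 mxE; have [C0|Cn0] := eqVneq ((C *m C^T) j j) 0.
  rewrite C0 mulr0 subr0 mxE big1 // => t _.
  by have /rowP/(_ t) := gram_diag_eq0 C0; rewrite !mxE => ->; rewrite mulr0.
by rewrite mulfVK // subrr.
Qed.

Lemma gram_schmidt k n (B : 'M[R]_(k, n)) : exists2 T : 'M[R]_k, \det T = 1 &
  orthogonal_rows (T *m B) /\
  forall i, ((T *m B) *m (T *m B)^T) i i <= (B *m B^T) i i.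
Proof.
elim: k B => [|k IH] B; first by exists 1; rewrite ?det1 //; split => -[].
move: B; rewrite -[k.+1]/(1 + k)%N => B.
rewrite -[B]vsubmxK; set b := usubmx B; set B' := dsubmx B.
have [T' dT' [oC' leC']] := IH B'; set C' := T' *m B' in oC' leC'.
have [mu cC] := orthogonal_rows_projection b oC'; set c := b - mu *m C' in cC.
have C'c : C' *m c^T = 0 by rewrite -[C']trmxK -trmx_mul cC trmx0.
have Ebc : b = c + mu *m C' by rewrite subrK.
exists (block_mx 1 (- (mu *m T')) 0 T'); first by rewrite det_ublock det1 mul1r.
rewrite mul_block_col mul1mx mul0mx add0r mulNmx -mulmxA -/C' -/c.
have gramE : col_mx c C' *m (col_mx c C')^T = block_mx (c *m c^T) 0 0 (C' *m C'^T).
  by rewrite tr_col_mx mul_col_row cC C'c.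
split=> [i j|i]; rewrite gramE -(fintype.splitK i).
  rewrite -(fintype.splitK j); case: (fintype.split i) => i'; case: (fintype.split j) => j' /= ij.
  - by move: ij; rewrite [i']ord1 [j']ord1 eqxx.
  - by rewrite block_mxEur mxE.
  - by rewrite block_mxEdl mxE.
  - by rewrite block_mxEdr oC' //; apply: contraNneq ij => ->.
rewrite tr_col_mx mul_col_row.
case: (fintype.split i) => i' /=; last by rewrite !block_mxEdr leC'.
rewrite !block_mxEul [in X in _ <= X]Ebc; clearbody c.
rewrite linearD /= mulmxDl !mulmxDr.
rewrite [(mu *m C')^T]trmx_mul mulmxA cC mul0mx addr0.
rewrite -[mu *m C' *m c^T]mulmxA C'c mulmx0 add0r.
by rewrite [X in _ <= X]mxE lerDl -trmx_mul gram_diag_ge0.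
Qed.

Lemma hadamard_le1 n (B : 'M[R]_n) :
  (forall i, (B *m B^T) i i <= 1) -> `|\det B| <= 1.
Proof.
move=> B1; have [T dT [oC leC]] := gram_schmidt B; set C := T *m B in oC leC.
have dC : \det C = \det B by rewrite det_mulmx dT mul1r.
have diagC : C *m C^T = diag_mx (\row_i (C *m C^T) i i).
  apply/matrixP => i j; rewrite [RHS]mxE [X in X *+ _]mxE.
  by have [->|ij] := eqVneq i j; rewrite ?mulr1n // mulr0n oC.
rewrite -(@expr_le1 _ 2) // -normrX ger0_norm ?sqr_ge0 //.
rewrite -dC expr2 -{2}det_tr -det_mulmx diagC det_diag.
by apply: prodr_ile1 => i _; rewrite mxE gram_diag_ge0 (le_trans (leC i)).
Qed.

Lemma cramer_coord_bound n (V : 'M[R]_n) (u : 'rV[R]_n) :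
  (forall i, (V *m V^T) i i <= 1) -> (u *m u^T) 0 0 <= 1 -> \det V != 0 ->
  exists2 c : 'rV[R]_n, u = c *m V & forall i, `|c 0 i| <= `|\det V|^-1.
Proof.
move=> V1 u1 dV0; exists ((\det V)^-1 *: (u *m \adj V)).
  by rewrite -scalemxAl -mulmxA mul_adj_mx mul_mx_scalar scalerA mulVf // scale1r.
move=> i; pose W := \matrix_(l, j) if l == i then u 0 j else V l j.
have adjVW : (u *m \adj V) 0 i = \det W.
  rewrite (expand_det_row W i) mxE; apply: eq_bigr => j _.
  rewrite [\adj V j i]mxE mxE eqxx /cofactor; congr (_ * (_ * \det _)).
  by apply/matrixP => k l; rewrite !mxE eq_sym (negbTE (neq_lift i k)).
have W1 l : (W *m W^T) l l <= 1.
  suff -> : (W *m W^T) l l = if l == i then (u *m u^T) 0 0 else (V *m V^T) l l.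
    by case: ifP.
  by case: ifP => li; rewrite !mxE; apply: eq_bigr => j _; rewrite !mxE li.
rewrite mxE adjVW normrM normfV -[X in _ <= X]mulr1 ler_wpM2l ?invr_ge0 //.
exact: hadamard_le1.
Qed.

End Hadamard.

Section EuclideanNorm.
Variables (R : realType) (n : nat).
Implicit Types (u w : 'rV[R]_n).

Lemma enorm_ge0 u : 0 <= enorm u.
Proof. exact: sqrtr_ge0. Qed.

Lemma enorm_sq u : enorm u ^+ 2 = \sum_(i < n) (u ord0 i) ^+ 2.
Proof. by rewrite /enorm sqr_sqrtr // sumr_ge0 // => i _; rewrite sqr_ge0. Qed.

Lemma enorm_sq_gram u : enorm u ^+ 2 = (u *m u^T) 0 0.
Proof. by rewrite enorm_sq mxE; apply: eq_bigr => j _; rewrite !mxE expr2. Qed.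

Lemma enorm_coord u j : `|u ord0 j| <= enorm u.
Proof.
rewrite /enorm -sqrtr_sqr ler_wsqrtr // (bigD1 j) //= lerDl.
by apply: sumr_ge0 => i _; rewrite sqr_ge0.
Qed.

Lemma enorm_eq0 u : (enorm u == 0) = (u == 0).
Proof.
apply/eqP/eqP => [u0|->]; last by rewrite /enorm big1 ?sqrtr0 // => i _; rewrite mxE expr0n.
by apply/rowP => j; apply/eqP; rewrite mxE -normr_le0 -u0 enorm_coord.
Qed.

Lemma enorm0 : enorm (0 : 'rV[R]_n) = 0.
Proof. by apply/eqP; rewrite enorm_eq0. Qed.

Lemma enorm_gt0 u : (0 < enorm u) = (u != 0).
Proof. by rewrite lt_def enorm_eq0 enorm_ge0 andbT. Qed.

Lemma enormZ a u : enorm (a *: u) = `|a| * enorm u.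
Proof.
rewrite /enorm -sqrtr_sqr -sqrtrM ?sqr_ge0 // mulr_sumr; congr Num.sqrt.
by apply: eq_bigr => i _; rewrite mxE exprMn.
Qed.

Lemma enormN u : enorm (- u) = enorm u.
Proof. by rewrite -scaleN1r enormZ normrN normr1 mul1r. Qed.

Lemma enormB u w : enorm (u - w) = enorm (w - u).
Proof. by rewrite -enormN opprB. Qed.

Lemma dot_le_enorm u w : \sum_(i < n) u ord0 i * w ord0 i <= enorm u * enorm w.
Proof.
have [->|/negbTE w0] := eqVneq w 0.
  by rewrite big1 ?mulr_ge0 ?enorm_ge0 // => i _; rewrite mxE mulr0.
have [->|/negbTE u0] := eqVneq u 0.
  by rewrite big1 ?mulr_ge0 ?enorm_ge0 // => i _; rewrite mxE mul0r.
have ab_gt0 : 0 < enorm u * enorm w by rewrite mulr_gt0 // enorm_gt0 ?u0 ?w0.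
set a := enorm u in ab_gt0 *; set b := enorm w in ab_gt0 *; set s := \sum_(i < n) _.
have : 0 <= \sum_(i < n) (b * u ord0 i - a * w ord0 i) ^+ 2.
  by apply: sumr_ge0 => i _; rewrite sqr_ge0.
have -> : \sum_(i < n) (b * u ord0 i - a * w ord0 i) ^+ 2 =
    b ^+ 2 * \sum_(i < n) (u ord0 i) ^+ 2 - 2 * (a * b) * s +
    a ^+ 2 * \sum_(i < n) (w ord0 i) ^+ 2.
  by rewrite /s !mulr_sumr -sumrB -big_split /=; apply: eq_bigr => i _; ring.
rewrite -!enorm_sq -/a -/b => h; rewrite -(ler_pM2l ab_gt0); nra.
Qed.

Lemma enormD u w : enorm (u + w) <= enorm u + enorm w.
Proof.
rewrite -(ler_pXn2r (_ : (0 < 2)%N)) ?nnegrE ?addr_ge0 ?enorm_ge0 //.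
have -> : enorm (u + w) ^+ 2 =
    enorm u ^+ 2 + 2 * \sum_(i < n) u ord0 i * w ord0 i + enorm w ^+ 2.
  rewrite !enorm_sq mulr_sumr -!big_split /=.
  by apply: eq_bigr => i _; rewrite mxE; ring.
have := dot_le_enorm u w; rewrite sqrrD; lra.
Qed.

Lemma normr_linear_le (Y : normedModType R) (L : {linear 'rV[R]_n -> Y}) u :
  `|L u| <= (\sum_(j < n) `|L 'e_j|) * enorm u.
Proof.
rewrite {1}(row_sum_delta u) linear_sum /= mulr_suml.
apply: le_trans (ler_norm_sum _ _ _) _; apply: ler_sum => j _.
by rewrite linearZ /= normrZ mulrC ler_wpM2l // enorm_coord.
Qed.

End EuclideanNorm.

Lemma ler_of_slack (R : realFieldType) (a b M : R) : 0 < M ->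
  (forall eta, 0 < eta <= 1 -> a <= b + M * eta) -> a <= b.
Proof.
move=> M0 slack; apply/ler_addgt0Pr => e e0.
have eta_gt0 : 0 < Num.min 1 (e / M) by rewrite lt_min ltr01 divr_gt0.
apply: le_trans (slack (Num.min 1 (e / M)) _) _; first by rewrite eta_gt0 ge_min lexx.
by rewrite lerD2l -ler_pdivlMl // ge_min mulrC lexx orbT.
Qed.

Lemma lee_of_forall_gt (R : realFieldType) (a : R) (s : \bar R) :
  (forall r, (s < r%:E)%E -> a <= r) -> (a%:E <= s)%E.
Proof.
case: s => [s||] a_le; last 2 first.
- exact: leey.
- by exfalso; have := a_le (a - 1)%R (ltNyr _); lra.
rewrite lee_fin; apply/ler_addgt0Pr => e e0; apply: a_le.
by rewrite lte_fin ltrDl.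
Qed.

Section LocalLipschitz.
Variables (R : realType) (n : nat) (Y : normedModType R).
Implicit Types (F A : set 'rV[R]_n) (x : 'rV[R]_n) (K : R).

Definition enorm_ball x (delta : R) : set 'rV[R]_n := [set y | enorm (y - x) < delta].

Definition enorm_lipschitz A (f : 'rV[R]_n -> Y) K :=
  forall y z, A y -> A z -> `|f y - f z| <= K * enorm (y - z).

Lemma der_dim_gt0 F x : der F x -> (0 < n)%N.
Proof.
case: n F x => // F x /(_ 1 ltr01)[y _ [/negP yx _]]; exfalso.
by apply: yx; apply/eqP/rowP => -[].
Qed.

Lemma limsup_pairs_lt_lipschitz F x (f : 'rV[R]_n -> Y) (c r : R) : 0 < c ->
  (limsup_pairs F x (fun y z => (c * (`|f y - f z| / enorm (y - z)))%R) < r%:E)%E ->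
  exists2 delta, 0 < delta & enorm_lipschitz (F `&` enorm_ball x delta) f (r / c).
Proof.
move=> c0 /ereal_inf_lt[_ [delta delta0 <-] sup_lt]; exists delta => // y z [Fy yx] [Fz zx].
have [<-|yz] := eqVneq y z; first by rewrite !subrr normr0 enorm0 mulr0.
have yz_gt0 : 0 < enorm (y - z) by rewrite enorm_gt0 subr_eq0.
have : c * (`|f y - f z| / enorm (y - z)) < r.
  rewrite -lte_fin; apply: le_lt_trans sup_lt; apply: ereal_sup_ubound.
  by exists (y, z).
move=> /ltW g_le; rewrite mulrAC -mulrA -ler_pdivrMr ?divr_gt0 //.
suff -> : `|f y - f z| / (enorm (y - z) / c) = c * (`|f y - f z| / enorm (y - z)) by [].
by field; rewrite !gt_eqF.
Qed.

Lemma lipschitz_near_ge0 F x (f : 'rV[R]_n -> Y) K (delta : R) :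
  F x -> der F x -> 0 < delta ->
  enorm_lipschitz (F `&` enorm_ball x delta) f K -> 0 <= K.
Proof.
move=> Fx /(_ delta) dx delta0 lipf; have [y Fy [yx y_near]] := dx delta0.
have yx_gt0 : 0 < enorm (y - x) by rewrite enorm_gt0 subr_eq0.
rewrite -(pmulr_lge0 _ yx_gt0); apply: le_trans (normr_ge0 _) (lipf _ _ _ _) => //.
by split=> //; rewrite /enorm_ball /= subrr enorm0.
Qed.

Lemma strict_derivative_lipschitz F x (f : 'rV[R]_n -> Y) (L : {linear 'rV[R]_n -> Y})
    K (delta : R) :
  der F x -> rel_strict_derivative F f x L -> 0 < delta ->
  enorm_lipschitz (F `&` enorm_ball x delta) f K ->
  forall eta, 0 < eta -> exists2 delta', 0 < delta' &
    enorm_lipschitz (F `&` enorm_ball x delta') L (K + eta).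
Proof.
move=> dx [[_ /(_ dx)] //|strict] delta0 lipf eta eta0.
have [dl dl0 strict_dl] := strict eta eta0.
exists (Num.min delta dl) => [|y z [Fy]]; first by rewrite lt_min delta0 dl0.
rewrite /enorm_ball /= !lt_min => /andP[yx yx'] [Fz] /andP[zx zx'].
have [<-|yz] := eqVneq y z; first by rewrite !subrr normr0 enorm0 mulr0.
have := lipf y z (conj Fy yx) (conj Fz zx); have := strict_dl y z Fy Fz yz yx' zx'.
rewrite -linearB mulrDl; set D := f y - f z => D_L D_le.
have -> : L (y - z) = D - (D - L (y - z)) by rewrite subKr.
exact: le_trans (ler_normB _ _) (lerD D_le D_L).
Qed.

Lemma Ptg_lipschitz_bound F x (L : {linear 'rV[R]_n -> Y}) K v : 0 <= K ->
  (forall eta, 0 < eta -> exists2 delta, 0 < delta &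
    enorm_lipschitz (F `&` enorm_ball x delta) L (K + eta)) ->
  Ptg F x v -> `|L v| <= K * enorm v.
Proof.
move=> K0 lipL [xs [ys [al [Fxs [Fys [cxs [cys cw]]]]]]].
set C := \sum_(j < n) `|L 'e_j|.
have C0 : 0 <= C by rewrite sumr_ge0.
apply: (@ler_of_slack _ _ _ (enorm v + K + 1 + C)).
  by have := enorm_ge0 v; lra.
move=> eta /andP[eta0 eta1]; have [delta delta0 lipLd] := lipL eta eta0.
have [N1 xsN1] := cxs delta delta0; have [N2 ysN2] := cys delta delta0.
have [N3 cwN3] := cw eta eta0; set k := (N1 + N2 + N3)%N.
have xs_near : enorm (xs k - x) < delta by apply: xsN1; rewrite /k -addnA leq_addr.
have ys_near : enorm (ys k - x) < delta by apply: ysN2; rewrite /k addnAC leq_addl.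
have w_near : enorm (al k *: (ys k - xs k) - v) < eta by apply: cwN3; rewrite leq_addl.
set w := al k *: (ys k - xs k) in w_near.
have Lw : `|L w| <= (K + eta) * enorm w.
  rewrite linearZ normrZ enormZ mulrCA ler_wpM2l // linearB.
  exact: lipLd.
have w_le : enorm w <= enorm v + eta.
  by rewrite -[w](subrK v) addrC (le_trans (enormD _ _)) // lerD2l ltW.
have Lvw : `|L v - L w| <= C * eta.
  by rewrite -linearB (le_trans (normr_linear_le _ _)) // ler_wpM2l // enormB ltW.
have Lv : `|L v| <= (K + eta) * (enorm v + eta) + C * eta.
  rewrite -[L v](subrK (L w)) addrC (le_trans (ler_normD _ _)) // lerD //.
  by rewrite (le_trans Lw) // ler_wpM2l // addr_ge0 // ltW.
have := enorm_ge0 v; nra.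
Qed.

Lemma normr_linear_le_basis (L : {linear 'rV[R]_n -> Y}) (V : 'M[R]_n) K u :
  \det V != 0 -> (forall i, enorm (row i V) <= 1) -> (forall i, `|L (row i V)| <= K) ->
  enorm u <= 1 -> `|L u| <= n%:R * K / `|\det V|.
Proof.
move=> detV0 V1 LV u1.
have gram_le1 (m : nat) (A : 'M[R]_(m, n)) i : enorm (row i A) <= 1 -> (A *m A^T) i i <= 1.
  move=> Ai1; have -> : (A *m A^T) i i = enorm (row i A) ^+ 2.
    by rewrite enorm_sq_gram !mxE; apply: eq_bigr => j _; rewrite !mxE.
  by rewrite expr_le1 ?enorm_ge0.
have u1' : enorm (row 0 u) <= 1 by rewrite row_id.
have [c -> c_le] :=
  cramer_coord_bound (fun i => gram_le1 _ V i (V1 i)) (gram_le1 _ u 0 u1') detV0.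
rewrite mulmx_sum_row linear_sum (le_trans (ler_norm_sum _ _ _)) //.
rewrite mulrAC -mulrA mulr_natl -[n in _ *+ n]card_ord -sumr_const; apply: ler_sum => i _.
by rewrite linearZ normrZ ler_pM.
Qed.

End LocalLipschitz.

Theorem lemmaB1 (R : realType) (n : nat) (Y : normedModType R)
    (F : set 'rV[R]_n) (x : 'rV[R]_n) (f : 'rV[R]_n -> Y)
    (L : {linear 'rV[R]_n -> Y}) (v : 'I_n -> 'rV[R]_n) (d : R) :
  F x -> der F x ->
  rel_strict_derivative F f x L ->
  (forall i, Ptg F x (v i)) ->
  (forall i, enorm (v i) = 1) ->
  0 < d -> d < `|\det (\matrix_(i, j) v i ord0 j)| ->
  (opnorm L <= limsup_pairs F x (fun y z => (n%:R / d * (`|f y - f z| / enorm (y - z)))%R))%E.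
Proof.
move=> Fx dx dfx Ptg_v v1 d0; set V := \matrix_(i, j) v i ord0 j => d_lt_det.
have rowV i : row i V = v i by apply/rowP => j; rewrite !mxE.
have n_gt0 : 0 < n%:R :> R by rewrite ltr0n (der_dim_gt0 dx).
have c0 : 0 < n%:R / d by rewrite divr_gt0.
have det_gt0 : 0 < `|\det V| := lt_trans d0 d_lt_det.
apply: ge_ereal_sup => _ [u u1 <-]; apply: lee_of_forall_gt => r.
case/(limsup_pairs_lt_lipschitz c0) => delta delta0 lipf.
have K0 := lipschitz_near_ge0 Fx dx delta0 lipf.
have LV i : `|L (row i V)| <= r / (n%:R / d).
  have := Ptg_lipschitz_bound K0 (strict_derivative_lipschitz dx dfx delta0 lipf) (Ptg_v i).
  by rewrite rowV v1 mulr1.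
have V1 i : enorm (row i V) <= 1 by rewrite rowV v1.
have detV0 : \det V != 0 by rewrite -normr_gt0.
apply: le_trans (normr_linear_le_basis detV0 V1 LV u1) _.
have r0 : 0 <= r by move: K0; rewrite pmulr_lge0 ?invr_gt0.
have -> : n%:R * (r / (n%:R / d)) = r * d.
  by field; rewrite !gt_eqF.
by rewrite ler_pdivrMr // ler_wpM2l // ltW.
Qed.
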